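(* Let $p \geq 1$, let $\boldsymbol \Omega$ be a $p\times p$ positive definite matrix and $\boldsymbol \Psi$ a $p\times p$ non-diagonal positive definite matrix with unit diagonal. Let $\boldsymbol \beta = \boldsymbol s \circ \boldsymbol z$ where $\boldsymbol z \sim \text{normal}(\boldsymbol 0, \boldsymbol \Omega)$ and $\boldsymbol s \sim \text{normal}(\boldsymbol 0, \boldsymbol \Psi)$ are independent (the SPN prior). Then for every $j \in \{1,\dots,p\}$ the marginal prior density of $\beta_j$ at $0$, $$p(\beta_j = 0 \mid \boldsymbol \Psi, \boldsymbol \Omega) = \int_{\mathbb{R}^{p-1}} \int_{\mathbb{R}^p} \Big(\prod_{i=1}^p \frac{1}{|s_i|}\Big)\phi_{\boldsymbol \Omega}(\boldsymbol b/\boldsymbol s)\,\phi_{\boldsymbol \Psi}(\boldsymbol s)\, d\boldsymbol s\, d\boldsymbol b_{-j}\Big|_{b_j = 0},$$ equals $+\infty$.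
   Context: $\phi_{\boldsymbol A}$ denotes the $\text{normal}(\boldsymbol 0,\boldsymbol A)$ density, $\boldsymbol b/\boldsymbol s$ is elementwise division, $\circ$ is the elementwise product, and $\boldsymbol b_{-j}$ denotes $\boldsymbol b$ with its $j$-th coordinate removed (the outer integral is over $\boldsymbol b_{-j}$ with $b_j$ fixed at $0$). *)

From HB Require Import structures.
From mathcomp Require Import all_boot all_order all_algebra.
From mathcomp Require Import all_classical all_reals all_analysis.
Set Implicit Arguments. Unset Strict Implicit. Unset Printing Implicit Defensive.
Import Order.TTheory GRing.Theory Num.Theory.
Local Open Scope ring_scope.
Local Open Scope ereal_scope.

(* Iterated one-dimensional Lebesgue integrals.  [iter_int D n F] integrates
   F : (nat -> R) -> \bar R over the coordinates k < n with [D k] true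
   (each w.r.t. the Lebesgue measure on R, innermost = coordinate 0), while
   every coordinate k < n with [D k] false is fixed to 0 (coordinates >= n
   are irrelevant and set to 0). *)
Fixpoint iter_int (R : realType) (D : nat -> bool) (n : nat)
    (F : (nat -> R) -> \bar R) : \bar R :=
  match n with
  | 0 => F (fun _ => 0%R)
  | n'.+1 =>
      if D n' then
        \int[@lebesgue_measure R]_(x in [set: R])
           iter_int D n' (fun v => F (fun k => if k == n' then x else v k))
      else iter_int D n' (fun v => F (fun k => if k == n' then 0%R else v k))
  end.

(* Lebesgue integral of a nonnegative function over R^n (row vectors),
   as an iterated integral (equal to the product-measure integral by Tonelli
   for measurable nonnegative integrands). *)
Definition int_Rn (R : realType) (n : nat) (F : 'rV[R]_n -> \bar R) : \bar R :=
  iter_int predT n (fun v => F (\row_(i < n) v i)).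

Definition int_Rn_except0 (R : realType) (n : nat) (j : 'I_n)
    (F : 'rV[R]_n -> \bar R) : \bar R :=
  iter_int (fun k => k != nat_of_ord j) n (fun v => F (\row_(i < n) v i)).

Definition qform (R : pzRingType) (n : nat) (A : 'M[R]_n) (x : 'rV[R]_n) : R :=
  (x *m A *m x^T) ord0 ord0.

Definition posdef (R : realFieldType) (n : nat) (A : 'M[R]_n) : Prop :=
  A^T = A /\ forall x : 'rV[R]_n, (x != 0)%R -> (0 < qform A x)%R.

Definition normal_density (R : realType) (n : nat) (A : 'M[R]_n)
    (x : 'rV[R]_n) : R :=
  ((2 * pi) `^ (- (n%:R / 2)) * (\det A) `^ (- (1/2))
    * expR (- (qform (invmx A) x) / 2))%R.

Definition spn_integrand (R : realType) (n : nat) (Om Psi : 'M[R]_n)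
    (b s : 'rV[R]_n) : R :=
  ((\prod_(i < n) `|s ord0 i|^-1)
   * normal_density Om (\row_(i < n) (b ord0 i / s ord0 i))
   * normal_density Psi s)%R.

Definition spn_marginal_at0 (R : realType) (n : nat) (Om Psi : 'M[R]_n)
    (j : 'I_n) : \bar R :=
  int_Rn_except0 j (fun b => int_Rn (fun s => (spn_integrand Om Psi b s)%:E)).

From HB Require Import structures.
From mathcomp Require Import all_boot all_order all_algebra.
From mathcomp Require Import all_classical all_reals all_analysis.
From mathcomp Require Import ring lra.
Set Implicit Arguments. Unset Strict Implicit. Unset Printing Implicit Defensive.
Import Order.TTheory GRing.Theory Num.Theory.
Local Open Scope ring_scope.

(* At b_j = 0 the integrand is bounded below by c / s_j, for some c > 0, on the
   box b_k in [-1, 1], s_k in [1, 2] (k <> j), s_j in (0, 1]: both normal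
   densities are bounded away from 0 on bounded sets, and b_j / s_j = 0 whatever
   s_j is, so the only singular factor left is 1 / |s_j|.  As 1/s is not
   integrable at 0 the integral diverges.  To work with finite iterated
   integrals of products only, 2/x is minorised on (0, 1] by the dyadic
   staircase sum_(k < N) 2^k 1_(0, 2^-k], whose integral is N; this bounds the
   marginal below by K N for every N.  Neither the unit diagonal nor the
   off-diagonal entry of Psi plays any role. *)

Section nonneg_integral.
Context d (T : measurableType d) (R : realType) (mu : {measure set T -> \bar R}).
Local Open Scope ereal_scope.

(* No measurability is needed: the integral of a nonnegative function is the
   supremum of the integrals of its simple minorants. *)
Lemma ge0_le_integralT (f g : T -> \bar R) :
  (forall x, 0 <= f x) -> (forall x, f x <= g x) ->
  \int[mu]_x f x <= \int[mu]_x g x.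
Proof.
move=> f0 fg; have g0 x : 0 <= g x := le_trans (f0 x) (fg x).
rewrite /integral !patch_setT.
have posE h : (forall x, 0 <= h x) -> h^\+ = h.
  by move=> h0; apply/funext => x; apply: (ge0_funeposE (D := setT)); rewrite ?inE.
have negE h : (forall x, 0 <= h x) -> h^\- = cst 0.
  by move=> h0; apply/funext => x; apply: (ge0_funenegE (D := setT)); rewrite ?inE.
rewrite !posE // !negE //; apply: leeB => //; apply: ereal_sup_le.
by move=> _ [h hf <-]; exists h => // x; exact: le_trans (hf x) (fg x).
Qed.

End nonneg_integral.

Section iterated_integral.
Context (R : realType) (D : nat -> bool).
Local Open Scope ereal_scope.

(* [iter_int D n F] only evaluates [F] at such points. *)
Definition supported_in (v : nat -> R) := forall k, ~~ D k -> v k = 0%R.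

Lemma supported_in_update (v : nat -> R) n x :
  supported_in v -> D n \/ x = 0%R ->
  supported_in (fun k => if k == n then x else v k).
Proof.
move=> vD Dx k Dk; case: eqP => [kn|_]; last exact: vD.
by case: Dx => // Dn; move: Dk; rewrite kn Dn.
Qed.

Lemma iter_int_ge0 n (F : (nat -> R) -> \bar R) :
  (forall v, 0 <= F v) -> 0 <= iter_int D n F.
Proof.
elim: n F => [|n IH] F F0 //=.
by case: (D n); [apply: integral_ge0 => x _|]; exact: IH.
Qed.

Lemma le_iter_int n (F G : (nat -> R) -> \bar R) :
  (forall v, 0 <= F v) -> (forall v, supported_in v -> F v <= G v) ->
  iter_int D n F <= iter_int D n G.
Proof.
elim: n F G => [|n IH] F G F0 FG /=; first exact/FG.
case Dn: (D n).
  apply: ge0_le_integralT => x; first exact: iter_int_ge0.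
  by apply: IH => // v vD; apply/FG/supported_in_update => //; left.
by apply: IH => // v vD; apply/FG/supported_in_update => //; right.
Qed.

Variables (f : nat -> R -> R) (I : nat -> R).
Hypothesis f_ge0 : forall k x, (0 <= f k x)%R.
Hypothesis measurable_f : forall k, measurable_fun setT (f k).
Hypothesis integral_f : forall k, \int[lebesgue_measure]_x (f k x)%:E = (I k)%:E.

Lemma iter_int_prod n (G : (nat -> R) -> \bar R) (c : R) : (0 <= c)%R ->
  (forall v, supported_in v -> G v = (c * \prod_(k < n | D k) f k (v k))%:E) ->
  iter_int D n G = (c * \prod_(k < n | D k) I k)%:E.
Proof.
have I_ge0 k : (0 <= I k)%R.
  by rewrite -lee_fin -integral_f; apply: integral_ge0 => x _; rewrite lee_fin.
elim: n G c => [|n IH] G c c0 GE /=; first by rewrite GE ?big_ord0.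
rewrite big_mkcond big_ord_recr /= -big_mkcond; case Dn: (D n) => /=.
  have inner x : iter_int D n (fun v => G (fun k => if k == n then x else v k))
      = ((c * \prod_(k < n | D k) I k)%R%:E * (f n x)%:E).
    rewrite (IH _ (c * f n x)%R) ?mulr_ge0 // -?EFinM; first by congr (_%:E); ring.
    move=> v vD; rewrite GE; last by apply: supported_in_update => //; left.
    rewrite big_mkcond big_ord_recr /= -big_mkcond Dn eqxx; congr (_%:E).
    rewrite mulrAC -mulrA; congr (_ * (_ * _))%R.
    by apply: eq_bigr => k _; rewrite ltn_eqF.
  under eq_integral do rewrite inner.
  rewrite ge0_integralZl_EFin ?integral_f -?EFinM ?mulrA ?mulr_ge0 ?prodr_ge0 //.
    by move=> x _; rewrite lee_fin.
  by apply/measurable_realfun.measurable_EFinP; exact: measurable_f.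
rewrite mulr1 (IH _ c) // => v vD.
rewrite GE; last by apply: supported_in_update => //; right.
rewrite big_mkcond big_ord_recr /= -big_mkcond Dn mulr1; congr (_ * _)%R%:E.
by apply: eq_bigr => k _; rewrite ltn_eqF.
Qed.

Lemma iter_int_ge_prod n (F : (nat -> R) -> \bar R) (c : R) : (0 <= c)%R ->
  (forall v, supported_in v -> (c * \prod_(k < n | D k) f k (v k))%:E <= F v) ->
  (c * \prod_(k < n | D k) I k)%:E <= iter_int D n F.
Proof.
move=> c0 Fge.
rewrite -(@iter_int_prod n (fun v => (c * \prod_(k < n | D k) f k (v k))%:E)) //.
by apply: le_iter_int => // v; rewrite lee_fin mulr_ge0 ?prodr_ge0.
Qed.

End iterated_integral.

Section indicator.
Context {R : realType}.

Definition ind (i : interval R) : R -> R := \1_[set` i].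

Lemma indE i x : ind i x = (x \in i)%:R.
Proof. by rewrite /ind indicE mem_setE. Qed.

Lemma ind_ge0 i x : 0 <= ind i x.
Proof. by rewrite indE ler0n. Qed.

Lemma measurable_ind i : measurable_fun setT (ind i).
Proof. exact: measurable_realfun.measurable_indic. Qed.

Lemma integral_ind (l r : bool) (a b : R) : a < b ->
  (\int[lebesgue_measure]_x (ind (Interval (BSide l a) (BSide r b)) x)%:E
    = (b - a)%:E)%E.
Proof.
move=> ab; rewrite integral_indic //= setIT lebesgue_measure_itv /=.
by rewrite lte_fin ab EFinB.
Qed.

Lemma prod_ind (I : finType) (P : pred I) i (x : I -> R) :
  \prod_(k | P k) ind i (x k) = [forall (k | P k), x k \in i]%:R.
Proof.
case: (boolP [forall (k | P k), x k \in i]) => [/forall_inP xi|].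
  by rewrite big1 // => k Pk; rewrite indE xi.
rewrite negb_forall => /existsP [k]; rewrite negb_imply => /andP [Pk xk].
by rewrite (bigD1 k) //= indE (negbTE xk) mul0r.
Qed.

End indicator.

Section inverse_staircase.
Context {R : realType}.

Definition inv_stairs (N : nat) (x : R) : R :=
  \sum_(k < N) 2 ^+ k * ind `]0, (2 ^+ k)^-1] x.

Lemma inv_stairs_ge0 N x : 0 <= inv_stairs N x.
Proof. by apply: sumr_ge0 => k _; rewrite mulr_ge0 ?ind_ge0 ?exprn_ge0. Qed.

Lemma measurable_inv_stairs N : measurable_fun setT (inv_stairs N).
Proof.
apply: measurable_sum => k; apply: measurable_realfun.measurable_funM.
  exact: measurable_cst.
exact: measurable_ind.
Qed.

Lemma integral_inv_stairs N :
  (\int[lebesgue_measure]_x (inv_stairs N x)%:E = N%:R%:E)%E.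
Proof.
have pow2_gt0 (k : nat) : 0 < (2 ^+ k : R) by rewrite exprn_gt0.
under eq_integral do rewrite -sumEFin.
rewrite ge0_integral_sum //; last 2 first.
- move=> k; apply/measurable_realfun.measurable_EFinP.
  apply: measurable_realfun.measurable_funM; first exact: measurable_cst.
  exact: measurable_ind.
- by move=> k x _; rewrite lee_fin mulr_ge0 ?ind_ge0 ?ltW.
under eq_bigr do under eq_integral do rewrite EFinM.
transitivity (\sum_(k < N) (1%:E : \bar R))%E.
  apply: eq_bigr => k _; rewrite ge0_integralZl_EFin ?ltW //.
  - by rewrite integral_ind ?invr_gt0 // subr0 -EFinM divff ?gt_eqF.
  - by move=> x _; rewrite lee_fin ind_ge0.
  - by apply/measurable_realfun.measurable_EFinP; exact: measurable_ind.
by rewrite sumEFin sumr_const card_ord.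
Qed.

Lemma inv_stairsS N x :
  inv_stairs N.+1 x = ind `]0, 1] x + 2 * inv_stairs N (2 * x).
Proof.
rewrite /inv_stairs big_ord_recl expr0 invr1 mul1r mulr_sumr; congr (_ + _).
apply: eq_bigr => k _; rewrite /bump /= exprS -mulrA; congr (_ * (_ * _)).
rewrite !indE !in_itv /= invfM.
have : 0 < (2 ^+ k : R)^-1 by rewrite invr_gt0 exprn_gt0.
set y := (2 ^+ k)^-1 => y0.
suff -> : (0 < x <= 2^-1 * y) = (0 < 2 * x <= y) by [].
by apply/idP/idP => /andP [h1 h2]; apply/andP; split; lra.
Qed.

Lemma inv_stairs_le N x : inv_stairs N x <= ind `]0, 1] x * (2 / x - 1).
Proof.
elim: N x => [|N IH] x.
  rewrite /inv_stairs big_ord0 indE in_itv /=.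
  case: (boolP (0 < x <= 1)) => [/andP [x0 x1]|]; last by rewrite mul0r.
  by rewrite mul1r subr_ge0 ler_pdivlMr // mul1r; lra.
rewrite inv_stairsS.
apply: le_trans (lerD (lexx _) (ler_wpM2l _ (IH (2 * x)))) _ => //.
rewrite !indE !in_itv /=.
have [x0|x0] := ltrP 0 x; last first.
  rewrite (_ : 0 < 2 * x = false) ?mul0r ?mulr0 ?addr0 //.
  by apply/negbTE; rewrite -leNgt; lra.
have -> : 2 / (2 * x) = x^-1 by rewrite invfM mulrA divff // mul1r.
rewrite mulr_gt0 //=.
have [x1|x1] := lerP x 1; have [x2|x2] := lerP (2 * x) 1;
  rewrite /= ?mul1r ?mul0r ?addr0 ?mulr0.
- lra.
- have : 1 <= x^-1 by rewrite invf_ge1.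
  by move: (x^-1) => y; lra.
- lra.
- lra.
Qed.

End inverse_staircase.

Lemma qform_le (R : realDomainType) n (M : 'M[R]_n) (x : 'rV[R]_n) r :
  (forall i, `|x ord0 i| <= r) -> qform M x <= r ^+ 2 * \sum_k \sum_i `|M i k|.
Proof.
move=> xr; rewrite /qform !mxE mulr_sumr; apply: le_trans (ler_norm _) _.
apply: le_trans (ler_norm_sum _ _ _) _; apply: ler_sum => k _.
rewrite !mxE mulr_suml mulr_sumr; apply: le_trans (ler_norm_sum _ _ _) _.
apply: ler_sum => i _; rewrite !normrM mulrAC mulrC expr2 [X in _ <= X]mulrC.
by apply: ler_wpM2l => //; apply: ler_pM => //; exact: xr.
Qed.

Lemma det_posdef_neq0 (R : realFieldType) n (A : 'M[R]_n) :
  posdef A -> \det A != 0.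
Proof.
move=> [_ A_pos]; apply/negP => /det0P [v v0 vA].
by have := A_pos v v0; rewrite /qform vA mul0mx mxE ltxx.
Qed.

Lemma normal_density_ge_box (R : realType) n (A : 'M[R]_n) (r : R) : posdef A ->
  exists2 c : R, 0 < c &
    forall x : 'rV_n, (forall i, `|x ord0 i| <= r) -> c <= normal_density A x.
Proof.
move=> A_pd; set S := \sum_k \sum_i `|invmx A i k|.
exists ((2 * pi) `^ (- (n%:R / 2)) * (\det A) `^ (- (1/2))
        * expR (- (r ^+ 2 * S) / 2)).
  have det_pow : 0 < (\det A) `^ (- (1/2)).
    by rewrite lt0r powR_ge0 powR_eq0 (negbTE (det_posdef_neq0 A_pd)).
  by rewrite !mulr_gt0 ?expR_gt0 // powR_gt0 ?mulr_gt0 ?pi_gt0.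
move=> x xr; apply: ler_wpM2l; first by rewrite mulr_ge0 ?powR_ge0.
rewrite ler_expR; have := qform_le (invmx A) xr; rewrite -/S.
by move: (qform _ x) (r ^+ 2 * S) => a b; lra.
Qed.

Lemma spn_integrand_ge0 (R : realType) p (Om Psi : 'M[R]_p) b s :
  0 <= spn_integrand Om Psi b s.
Proof.
have nd_ge0 n (A : 'M[R]_n) x : 0 <= normal_density A x.
  by rewrite /normal_density !mulr_ge0 ?powR_ge0 ?expR_ge0.
rewrite /spn_integrand mulr_ge0 ?nd_ge0 // mulr_ge0 ?nd_ge0 //.
by rewrite prodr_ge0 // => i _; rewrite invr_ge0.
Qed.

Section spn_lower_bound.
Context (R : realType) (p : nat) (Om Psi : 'M[R]_p) (j : 'I_p).
Hypotheses (Om_pd : posdef Om) (Psi_pd : posdef Psi).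

Lemma spn_integrand_ge_inv : exists2 c : R, 0 < c & forall b s : 'rV_p,
  b ord0 j = 0 ->
  (forall k, k != j -> b ord0 k \in `[-1, 1] /\ s ord0 k \in `[1, 2]) ->
  s ord0 j \in `]0, 1] ->
  c / s ord0 j <= spn_integrand Om Psi b s.
Proof.
have [cO cO0 OmE] := normal_density_ge_box 1 Om_pd.
have [cP cP0 PsiE] := normal_density_ge_box 2 Psi_pd.
set H := \prod_(k | k != j) (2 : R)^-1.
have H0 : 0 < H by rewrite prodr_gt0 // => k _; rewrite invr_gt0.
exists (H * cO * cP); first by rewrite !mulr_gt0.
move=> b s bj0 box; rewrite in_itv /= => /andP [sj0 sj1].
have [b_box s_box] : (forall k, k != j -> -1 <= b ord0 k <= 1) /\
                     (forall k, k != j -> 1 <= s ord0 k <= 2).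
  by split=> k /box []; rewrite !in_itv.
have prod_ge : (s ord0 j)^-1 * H <= \prod_i `|s ord0 i|^-1.
  rewrite (bigD1 j) //= (ger0_norm (ltW sj0)) ler_wpM2l ?invr_ge0 ?(ltW sj0) //.
  apply: ler_prod => k kj; rewrite invr_ge0 /=.
  have /andP [s1 s2] := s_box k kj.
  by rewrite lef_pV2 ?posrE ?normr_gt0 ?ger0_norm; lra.
have Om_box i : `|(\row_i (b ord0 i / s ord0 i)) ord0 i| <= 1.
  rewrite mxE; have [->|ij] := eqVneq i j; first by rewrite bj0 mul0r normr0.
  have /andP [b1 b2] := b_box i ij; have /andP [s1 s2] := s_box i ij.
  rewrite normrM normfV (@ger0_norm _ (s ord0 i)) ?ler_pdivrMr; try lra.
  by rewrite mul1r ler_norml; lra.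
have Psi_box i : `|s ord0 i| <= 2.
  have [->|ij] := eqVneq i j; first by rewrite ger0_norm; lra.
  by have /andP [s1 s2] := s_box i ij; rewrite ger0_norm; lra.
have -> : H * cO * cP / s ord0 j = (s ord0 j)^-1 * H * cO * cP by ring.
rewrite /spn_integrand; apply: ler_pM; last exact: PsiE.
- by rewrite !mulr_ge0 ?invr_ge0 ?ltW.
- exact: ltW.
apply: ler_pM; last exact: OmE.
- by rewrite !mulr_ge0 ?invr_ge0 ?ltW.
- exact: ltW.
exact: prod_ge.
Qed.

Lemma spn_integrand_ge_stairs : exists2 c : R, 0 < c &
  forall N (v w : nat -> R), v j = 0 ->
  c * \prod_(k < p | k != j :> nat) ind `[-1, 1] (v k)
    * \prod_(k < p) (if k == j :> nat then inv_stairs N else ind `[1, 2]) (w k)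
  <= spn_integrand Om Psi (\row_i v i) (\row_i w i).
Proof.
have [c c0 integrand_ge] := spn_integrand_ge_inv.
exists (c / 2); first by rewrite divr_gt0.
move=> N v w vj.
have -> : \prod_(k < p) (if k == j :> nat then inv_stairs N else ind `[1, 2]) (w k)
    = inv_stairs N (w j) * \prod_(k < p | k != j) ind `[1, 2] (w k).
  rewrite (bigD1 j) //= eqxx; congr (_ * _).
  by apply: eq_bigr => k kj; rewrite ifN.
rewrite !prod_ind.
have ge0 := spn_integrand_ge0 Om Psi (\row_i v i) (\row_i w i).
case: (boolP [forall (k : 'I_p | k != j :> nat), v k \in `[-1, 1]]) =>
  [/forall_inP v_box|_]; last by rewrite mulr0 mul0r.
case: (boolP [forall (k : 'I_p | k != j), w k \in `[1, 2]]) =>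
  [/forall_inP w_box|_]; last by rewrite !mulr0.
rewrite !mulr1; have := inv_stairs_le N (w j); rewrite indE.
case: (boolP (w j \in `]0, 1])) => wj; last first.
  rewrite mul0r => st_le0.
  have -> : inv_stairs N (w j) = 0.
    by apply/eqP; rewrite eq_le st_le0 inv_stairs_ge0.
  by rewrite !mulr0.
rewrite mul1r => st_le; apply: le_trans (integrand_ge _ _ _ _ _); first last.
- by rewrite mxE.
- by move=> k kj; rewrite !mxE; split; [exact: v_box | exact: w_box].
- by rewrite mxE.
rewrite mxE -mulrA ler_wpM2l ?(ltW c0) //.
by move: st_le; move: (inv_stairs _ _) (w j)^-1 => a b; lra.
Qed.

Lemma spn_marginal_at0_ge_linear : exists2 K : R, 0 < K &
  forall N, ((K * N%:R)%:E <= spn_marginal_at0 Om Psi j)%E.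
Proof.
have [c c0 minorant] := spn_integrand_ge_stairs.
exists (c * \prod_(k < p | k != j :> nat) 2); first by rewrite mulr_gt0 ?prodr_gt0.
move=> N; pose f k := if k == j :> nat then @inv_stairs R N else ind `[1, 2].
have f_ge0 k x : 0 <= f k x.
  by rewrite /f; case: ifP => _; [exact: inv_stairs_ge0 | exact: ind_ge0].
have f_meas k : measurable_fun setT (f k).
  by rewrite /f; case: ifP => _; [exact: measurable_inv_stairs | exact: measurable_ind].
have f_int k : (\int[lebesgue_measure]_x (f k x)%:E
    = (if k == j :> nat then N%:R else 1)%:E)%E.
  rewrite /f; case: ifP => _; first exact: integral_inv_stairs.
  by rewrite integral_ind; [congr (_%:E); lra | lra].
have box_int (k : nat) :
    (\int[lebesgue_measure]_x (@ind R `[-1, 1] x)%:E = 2%:R%:E)%E.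
  by rewrite integral_ind; [congr (_%:E); lra | lra].
have prod_f_int :
    \prod_(k < p | predT k) (if k == j :> nat then N%:R else 1) = N%:R :> R.
  by rewrite (bigD1 j) //= eqxx big1 ?mulr1 // => k kj; rewrite ifN.
rewrite /spn_marginal_at0 /int_Rn_except0 mulrAC.
apply: (iter_int_ge_prod (I := fun _ => 2%:R) (fun _ => @ind_ge0 R _)
  (fun _ => measurable_ind _) box_int) => [|v vD]; first by rewrite mulr_ge0 ?(ltW c0).
have vj : v j = 0 by apply: vD; rewrite negbK.
rewrite mulrAC -prod_f_int; apply: (iter_int_ge_prod f_ge0 f_meas f_int) => [|w _].
  by rewrite mulr_ge0 ?mulr_ge0 ?(ltW c0) ?prodr_ge0 // => k _; exact: ind_ge0.
by rewrite lee_fin; exact: minorant.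
Qed.

End spn_lower_bound.

Lemma eqy_ge_linear (R : realType) (x : \bar R) (K : R) :
  0 < K -> (forall N, ((K * N%:R)%:E <= x)%E) -> x = +oo%E.
Proof.
move=> K0 xge; apply/eqyP => A A0; apply: le_trans (xge (Num.trunc (A / K)).+1).
by rewrite lee_fin -ler_pdivrMl // mulrC; exact: ltW (truncnS_gt _).
Qed.

Theorem proposition2p3 (R : realType) (p : nat) (Om Psi : 'M[R]_p) :
  (1 <= p)%N ->
  posdef Om ->
  posdef Psi ->
  (forall i : 'I_p, Psi i i = 1) ->
  (exists i k : 'I_p, i != k /\ Psi i k != 0) ->
  forall j : 'I_p, spn_marginal_at0 Om Psi j = +oo%E.
Proof.
move=> _ Om_pd Psi_pd _ _ j.
have [K K0 marginal_ge] := spn_marginal_at0_ge_linear j Om_pd Psi_pd.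
exact: eqy_ge_linear K0 marginal_ge.
Qed.
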